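(* There exist instances of Bin Packing with Usage Cost for which $z_2^*>z_3^*$, where $z_2^*$ and $z_3^*$ are defined as follows. An instance consists of items whose distinct sizes are the positive integers $w'_1,\dots,w'_{n'}$, with $q_d\ge1$ items of size $w'_d$, and $m$ bins, bin $j$ having positive integer capacity $C_j$, fixed cost $f_j\ge 0$ and unit cost $c_j\ge 0$; $C_{\max}=\max_jC_j$. $z_2^*$ (cutting-stock relaxation): for each bin $j$, a pattern is an integer vector $g=(g_1,\dots,g_{n'})$ with $0\le g_d\le q_d$ and $\sum_d g_dw'_d\le C_j$; $I_j$ is the set of all patterns for bin $j$, the $i$-th pattern of bin $j$ being $(g_{1ij},\dots,g_{n'ij})$, with cost $co_{ij}=f_j+c_j\sum_d g_{dij}w'_d$ if nonzero and $co_{ij}=0$ if zero. $z_2^*=\min\sum_{j}\sum_{i\in I_j}co_{ij}p_{ij}$ subject to $\sum_{j}\sum_{i\in I_j}g_{dij}p_{ij}=q_d$ for all $d$, $\sum_{i\in I_j}p_{ij}=1$ for all $j$, $p_{ij}\ge0$. $z_3^*$ (arc-flow relaxation): let $I$ be the set of arcs $(a,a+w'_d)$ with $a\ge0$ integer and $a+w'_d\le C_{\max}$, with variables $x_{ab}\ge0$ for $(a,b)\in I$ and $y_{aj}\in[0,1]$ for each bin $j$ and $a\in\{0,\dots,C_{\max}\}$, with costs $co_{aj}=f_j+a\,c_j$ for $a>0$ and $co_{0j}=0$. $z_3^*=\min\sum_j\sum_{a}co_{aj}y_{aj}$ subject to: $\sum_{(a,b)\in I}x_{ab}-\sum_{(b,c)\in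 I}x_{bc}-\sum_j y_{bj}=0$ for every $b\in\{1,\dots,C_{\max}\}$; $-\sum_{(0,c)\in I}x_{0c}-\sum_j y_{0j}=-m$; $\sum_{a=0}^{C_j}y_{aj}=1$ for every $j$; $\sum_{(a,a+w'_d)\in I}x_{a,a+w'_d}=q_d$ for every $d$; $y_{aj}=0$ for all $j$ and $a\in\{C_j+1,\dots,C_{\max}\}$.
   Context: Bin Packing with Usage Cost: each item must be assigned to exactly one bin, the total size $l_j$ of the items in bin $j$ may not exceed $C_j$, a bin is used if it contains at least one item, a used bin $j$ costs $f_j+c_jl_j$, and the total cost is to be minimised. The two programs above are linear relaxations of exact integer formulations of this problem. *)

From HB Require Import structures.
From mathcomp Require Import all_boot all_order all_algebra.
Set Implicit Arguments. Unset Strict Implicit. Unset Printing Implicit Defensive.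
Import Order.TTheory GRing.Theory Num.Theory.
Local Open Scope ring_scope.

Section BPUC.
Variables (R : realFieldType) (n m : nat) (w q : 'I_n -> nat) (C : 'I_m -> nat)
          (f c : 'I_m -> R).

(* C_max = max_j C_j ;  Q = max_d q_d (bound used to enumerate patterns) *)
Definition Cmax : nat := \max_(j < m) C j.
Definition Qmax : nat := \max_(d < n) q d.

Definition pat := {ffun 'I_n -> 'I_Qmax.+1}.
Definition load (g : pat) : nat := (\sum_(d < n) (g d : nat) * w d)%N.
Definition is_pattern (j : 'I_m) (g : pat) : bool :=
  [forall d, (g d <= q d)%N] && (load g <= C j)%N.
Definition co2 (j : 'I_m) (g : pat) : R :=
  if [exists d, (g d : nat) != 0%N] then f j + c j * (load g)%:R else 0.

Definition lp2_feasible (p : 'I_m -> pat -> R) : Prop :=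
  [/\ (forall j g, is_pattern j g -> 0 <= p j g),
      (forall d, \sum_(j < m) \sum_(g | is_pattern j g) (g d : nat)%:R * p j g
                  = (q d)%:R) &
      (forall j, \sum_(g | is_pattern j g) p j g = 1)].
Definition lp2_obj (p : 'I_m -> pat -> R) : R :=
  \sum_(j < m) \sum_(g | is_pattern j g) co2 j g * p j g.

Definition node := 'I_Cmax.+1.
(* (a,b) in I  iff  b = a + w'_d for some d (and b <= Cmax, automatic) *)
Definition is_arc (e : node * node) : bool :=
  [exists d, (e.2 : nat) == (e.1 + w d)%N].
Definition co3 (j : 'I_m) (a : node) : R :=
  if (a : nat) == 0%N then 0 else f j + (a : nat)%:R * c j.

Definition lp3_feasible (xy : (node * node -> R) * ('I_m -> node -> R)) : Prop :=
  let x := xy.1 in let y := xy.2 in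
  (forall e, is_arc e -> 0 <= x e) /\
  (forall j a, 0 <= y j a <= 1) /\
  [/\
      (forall b : node, (0 < b)%N ->
         \sum_(e | is_arc e && (e.2 == b)) x e
         - \sum_(e | is_arc e && (e.1 == b)) x e
         - \sum_(j < m) y j b = 0),
      (- \sum_(e | is_arc e && ((e.1 : nat) == 0%N)) x e
         - \sum_(j < m) y j ord0 = - m%:R),
      (forall j, \sum_(a : node | (a <= C j)%N) y j a = 1),
      (forall d, \sum_(e : node * node | (e.2 : nat) == (e.1 + w d)%N) x e = (q d)%:R) &
      (forall j (a : node), (C j < a)%N -> y j a = 0)].
Definition lp3_obj (xy : (node * node -> R) * ('I_m -> node -> R)) : R :=
  \sum_(j < m) \sum_(a : node) co3 j a * xy.2 j a.

End BPUC.

Definition is_min (R : realFieldType) (T : Type) (feas : T -> Prop) (obj : T -> R) (z : R) :=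
  (exists x, feas x /\ obj x = z) /\ (forall x, feas x -> z <= obj x).

From HB Require Import structures.
From mathcomp Require Import all_boot all_order all_algebra.
From mathcomp Require Import lra.
Import Order.TTheory GRing.Theory Num.Theory.
Local Open Scope ring_scope.

(* One item of size 1 and one bin of capacity 2, fixed cost 1 and unit cost 0.  In the
   cutting-stock relaxation every pattern that packs the item costs 1, so the demand
   constraint forces cost 1.  The arc-flow relaxation may split the bin's unit of flow:
   half of it follows the arcs 0 -> 1 -> 2 and leaves at node 2, the other half leaves
   at node 0 (an empty bin, which is free), so each arc carries 1/2, the demand of one
   item is met, and only half of the fixed cost is paid. *)

Lemma is_min_const (R : realFieldType) (T : Type) (feas : T -> Prop) (obj : T -> R) z :
  (exists x, feas x) -> (forall x, feas x -> obj x = z) -> is_min feas obj z.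
Proof.
move=> [x fx] objE; split=> [|y /objE ->//].
by exists x; split; last exact: objE.
Qed.

Lemma lp2_feasible_integral (R : realFieldType) n m (w q : 'I_n -> nat) (C : 'I_m -> nat)
    (gs : 'I_m -> pat q) :
  (forall j, is_pattern w C j (gs j)) ->
  (forall d, (\sum_j (gs j d : nat))%N = q d) ->
  @lp2_feasible R n m w q C (fun j g => (g == gs j)%:R).
Proof.
move=> pat_gs cover; split=> [j g _ | d | j]; first by rewrite ler0n.
  rewrite -cover natr_sum; apply: eq_bigr => j _.
  rewrite (bigD1 (gs j)) //= eqxx mulr1 big1 ?addr0 // => g /andP[_ /negbTE ->].
  by rewrite mulr0.
by rewrite (bigD1 (gs j)) //= eqxx big1 ?addr0 // => g /andP[_ /negbTE ->].
Qed.

Lemma is_arc_unit n m (w : 'I_n -> nat) (C : 'I_m -> nat) (d0 : 'I_n) :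
  (forall d, w d = 1%N) -> forall e : node C * node C, is_arc w e = ((e.2 : nat) == e.1 + 1)%N.
Proof.
move=> w1 e; apply/existsP/idP => [[d] | arc_e]; first by rewrite w1.
by exists d0; rewrite w1.
Qed.

Section Instance.
Variable R : realFieldType.

Definition item_size : 'I_1 -> nat := fun=> 1%N.
Definition demand : 'I_1 -> nat := fun=> 1%N.
Definition capacity : 'I_1 -> nat := fun=> 2%N.
Definition fixed_cost : 'I_1 -> R := fun=> 1.
Definition unit_cost : 'I_1 -> R := fun=> 0.

Lemma Qmax_demand : Qmax demand = 1%N.
Proof. by rewrite /Qmax big_ord1. Qed.

Lemma co2_instance j (g : pat demand) :
  co2 item_size fixed_cost unit_cost j g = (g ord0 : nat)%:R.
Proof.
rewrite /co2 /fixed_cost /unit_cost mul0r addr0.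
have : (g ord0 < 2)%N by apply: leq_trans (ltn_ord _) _; rewrite Qmax_demand.
have -> : [exists d, (g d : nat) != 0%N] = ((g ord0 : nat) != 0%N).
  by apply/existsP/idP => [[d] | nz]; [rewrite (ord1 d) | exists ord0].
by case: (g ord0 : nat) => [|[|]].
Qed.

Lemma lp2_obj_instance (p : 'I_1 -> pat demand -> R) :
  lp2_feasible item_size capacity p ->
  lp2_obj item_size capacity fixed_cost unit_cost p = 1.
Proof.
move=> [_ /(_ ord0) + _]; rewrite /lp2_obj !big_ord1 => covered.
by rewrite -[1]/(demand ord0)%:R -covered; apply: eq_bigr => g _; rewrite co2_instance.
Qed.

Definition full_pattern : pat demand := [ffun=> inord 1].

Lemma lp2_min_instance :
  is_min (@lp2_feasible R _ _ item_size demand capacity)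
         (@lp2_obj R _ _ item_size demand capacity fixed_cost unit_cost) 1.
Proof.
have full_val d : (full_pattern d : nat) = 1%N by rewrite ffunE inordK // Qmax_demand.
apply: is_min_const lp2_obj_instance.
exists (fun j g => (g == full_pattern)%:R); apply: lp2_feasible_integral => [j | d].
  by rewrite /is_pattern /load big_ord1 full_val andbT; apply/forallP => d; rewrite full_val.
by rewrite big_ord1 full_val.
Qed.

Local Notation arc := (node capacity * node capacity)%type.
Local Notation flow_point := ((arc -> R) * ('I_1 -> node capacity -> R))%type.

Lemma Cmax_capacity : Cmax capacity = 2%N.
Proof. by rewrite /Cmax big_ord1. Qed.

Lemma val_inord_node k : (k <= 2)%N -> (inord k : node capacity) = k :> nat.
Proof. by move=> le_k2; rewrite inordK // Cmax_capacity ltnS. Qed.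

Lemma node_le_capacity j (a : node capacity) : (a <= capacity j)%N.
Proof. by rewrite -ltnS (leq_trans (ltn_ord a)) // Cmax_capacity. Qed.

Lemma node_cases (a : node capacity) : [\/ a = inord 0, a = inord 1 | a = inord 2].
Proof.
have := node_le_capacity ord0 a.
case: a => -[|[|[|k]]] a_lt _ //=; [constructor 1 | constructor 2 | constructor 3];
  by apply: val_inj; rewrite /= val_inord_node.
Qed.

Lemma sum_nodes (F : node capacity -> R) :
  \sum_a F a = F (inord 0) + F (inord 1) + F (inord 2).
Proof.
rewrite (bigD1 (inord 0)) // (bigD1 (inord 1)) -?val_eqE /= ?val_inord_node //.
rewrite (bigD1 (inord 2)) -?val_eqE /= ?val_inord_node //.
rewrite big_pred0 ?addr0 ?addrA // => a.
by case: (node_cases a) => ->; rewrite -!val_eqE /= !val_inord_node ?andbF.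
Qed.

Lemma is_arc_instance (e : arc) :
  is_arc item_size e = ((e.2 : nat) == e.1 + 1)%N.
Proof. exact: is_arc_unit ord0 (fun=> erefl) e. Qed.

Lemma arc01 : is_arc item_size (inord 0, inord 1 : node capacity).
Proof. by rewrite is_arc_instance /= !val_inord_node. Qed.

Lemma arc12 : is_arc item_size (inord 1, inord 2 : node capacity).
Proof. by rewrite is_arc_instance /= !val_inord_node. Qed.

Lemma sum_arcs (F : arc -> R) :
  \sum_(e | is_arc item_size e) F e = F (inord 0, inord 1) + F (inord 1, inord 2).
Proof.
rewrite (bigD1 _ arc01) (bigD1 (inord 1, inord 2)) /=; last first.
  by rewrite arc12 xpair_eqE -val_eqE /= !val_inord_node.
rewrite big_pred0 ?addr0 // => -[a b].
rewrite is_arc_instance !xpair_eqE /=.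
by case: (node_cases a) => ->; case: (node_cases b) => ->; rewrite -!val_eqE /= !val_inord_node.
Qed.

Lemma sum_arcsP (P : pred arc) (F : arc -> R) :
  \sum_(e | is_arc item_size e && P e) F e =
  (if P (inord 0, inord 1) then F (inord 0, inord 1) else 0) +
  (if P (inord 1, inord 2) then F (inord 1, inord 2) else 0).
Proof. by rewrite big_mkcondr sum_arcs. Qed.

Definition half_flow : flow_point :=
  (fun e => if is_arc item_size e then 1 / 2 else 0,
   fun _ a => if a == inord 1 then 0 else 1 / 2).

Lemma half_flow_feasible : lp3_feasible item_size demand half_flow.
Proof.
rewrite /lp3_feasible /=; split=> [e _ | ]; first by case: ifP => _; lra.
split=> [j a | ]; first by case: ifP => _; apply/andP; split; lra.
split=> [b b_gt0 | | j | d | j a].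
- rewrite !sum_arcsP big_ord1 /= arc01 arc12.
  by case: (node_cases b) b_gt0 => ->; rewrite -!val_eqE /= !val_inord_node //= => _; lra.
- by rewrite sum_arcsP big_ord1 /= arc01 -!val_eqE /= !val_inord_node //=; lra.
- rewrite (eq_bigl xpredT) ?sum_nodes => [|a]; last exact: node_le_capacity.
  by rewrite -!val_eqE /= !val_inord_node //=; lra.
- rewrite (eq_bigl (is_arc item_size (C := capacity))) ?sum_arcs /= ?arc01 ?arc12 /demand; first lra.
  by move=> e; rewrite is_arc_instance.
- by rewrite ltnNge node_le_capacity.
Qed.

Lemma lp3_obj_instance (xy : flow_point) :
  lp3_obj fixed_cost unit_cost xy = xy.2 ord0 (inord 1) + xy.2 ord0 (inord 2).
Proof.
rewrite /lp3_obj big_ord1 sum_nodes /co3 /fixed_cost /unit_cost !val_inord_node //=.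
by rewrite !mulr0 !addr0 !mul0r !mul1r add0r.
Qed.

(* Conservation at nodes 1 and 2 turns the objective y1 + y2 into the flow x01 on the
   first arc, and x01 = x12 + y1 >= x12 while x01 + x12 = 1. *)
Lemma lp3_obj_ge_half (xy : flow_point) :
  lp3_feasible item_size demand xy -> 1 / 2 <= lp3_obj fixed_cost unit_cost xy.
Proof.
case: xy => x y [_ [/= y_bnd [/= flow _ _ demand_met _]]].
have := flow (inord 1); have := flow (inord 2).
rewrite !sum_arcsP !big_ord1 /= -!val_eqE /= !val_inord_node //= => /(_ isT) flow2 /(_ isT) flow1.
have := demand_met ord0.
rewrite (eq_bigl (is_arc item_size (C := capacity))) ?sum_arcs => [arc_demand|e]; last first.
  by rewrite is_arc_instance.
have /andP[y1_ge0 _] := y_bnd ord0 (inord 1).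
rewrite lp3_obj_instance /=; move: arc_demand; rewrite /demand /=; lra.
Qed.

Lemma lp3_min_instance :
  is_min (@lp3_feasible R _ _ item_size demand capacity) (lp3_obj fixed_cost unit_cost) (1 / 2).
Proof.
split=> [|xy]; last exact: lp3_obj_ge_half.
exists half_flow; split; first exact: half_flow_feasible.
by rewrite lp3_obj_instance /= eqxx -val_eqE /= !val_inord_node //= add0r.
Qed.

End Instance.

Theorem proposition4 (R : realFieldType) :
  exists (n m : nat) (w q : 'I_n -> nat) (C : 'I_m -> nat) (f c : 'I_m -> R) (z2 z3 : R),
    [/\ (forall d, (0 < w d)%N), injective w & (forall d, (1 <= q d)%N)] /\
    [/\ (forall j, (0 < C j)%N), (forall j, 0 <= f j) & (forall j, 0 <= c j)] /\
    [/\ is_min (@lp2_feasible R n m w q C) (@lp2_obj R n m w q C f c) z2,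
        is_min (@lp3_feasible R n m w q C) (@lp3_obj R m C f c) z3 &
        z3 < z2].
Proof.
exists 1%N, 1%N, item_size, demand, capacity, (fixed_cost R), (unit_cost R), 1, (1 / 2).
split; first by split=> // d1 d2 _; rewrite (ord1 d1) (ord1 d2).
split; first by split=> // j; rewrite /fixed_cost ler01.
split; [exact: lp2_min_instance R | exact: lp3_min_instance R | lra].
Qed.
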